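(* Let $m\geq3$ be odd, let $M(m)$ be the monoid with generators $\rho_1,\rho_2$ and the single relation $\rho_1\rho_2^{(m-1)/2}\rho_1=\rho_2^{(m+1)/2}$, and set $\Delta:=\rho_2^{\,m}$. Then $(M(m),\Delta)$ is a Garside monoid, and its group of fractions is the group $B(m)$ defined by the same presentation (which is isomorphic to the Artin–Tits group of dihedral type $I_2(m)$).
   Context: A Garside monoid is a pair $(M,\Delta)$ with $M$ a monoid and $\Delta\in M$ such that: (1) $M$ is left- and right-cancellative; (2) divisibility in $M$ is Noetherian, i.e. there is $\lambda:M\to\mathbb{Z}_{\geq 0}$ with $\lambda(ab)\geq\lambda(a)+\lambda(b)$ for all $a,b$ and $\lambda(a)\neq 0$ for $a\neq 1$; (3) any two elements of $M$ admit a left-lcm, a right-lcm, a left-gcd and a right-gcd (with respect to right- resp. left-divisibility as appropriate, where $a$ left-divides $c$ if $c=ab$ and $b$ right-divides $c$ if $c=ab$); (4) the left-divisors and the right-divisors of $\Delta$ coincide and generate $M$; (5) the set of divisors of $\Delta$ is finite. *)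

From mathcomp Require Import all_boot.
Set Implicit Arguments. Unset Strict Implicit. Unset Printing Implicit Defensive.

Section Presented.
Variable A : eqType.

Inductive mcong (R : seq A -> seq A -> Prop) : seq A -> seq A -> Prop :=
| mcong_refl u : mcong R u u
| mcong_sym u v : mcong R u v -> mcong R v u
| mcong_trans u v w : mcong R u v -> mcong R v w -> mcong R u w
| mcong_rel x y u v : R u v -> mcong R (x ++ u ++ y) (x ++ v ++ y).

(** Group words: letters (a, false) = a, (a, true) = a^-1. *)
Definition ginv (w : seq (A * bool)) : seq (A * bool) :=
  rev (map (fun p => (p.1, ~~ p.2)) w).
Definition iota (w : seq A) : seq (A * bool) := map (fun a => (a, false)) w.

Inductive gcong (R : seq A -> seq A -> Prop) :
    seq (A * bool) -> seq (A * bool) -> Prop :=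
| gcong_refl u : gcong R u u
| gcong_sym u v : gcong R u v -> gcong R v u
| gcong_trans u v w : gcong R u v -> gcong R v w -> gcong R u w
| gcong_rel x y u v : R u v -> gcong R (x ++ iota u ++ y) (x ++ iota v ++ y)
| gcong_free x y a b : gcong R (x ++ [:: (a, b); (a, ~~ b)] ++ y) (x ++ y).

Definition ldiv R (a c : seq A) := exists b, mcong R (a ++ b) c.
Definition rdiv R (b c : seq A) := exists a, mcong R (a ++ b) c.

Definition is_lcm (div : seq A -> seq A -> Prop) a b c :=
  [/\ div a c, div b c & forall d, div a d -> div b d -> div c d].
Definition is_gcd (div : seq A -> seq A -> Prop) a b c :=
  [/\ div c a, div c b & forall d, div d a -> div d b -> div d c].

Definition garside_monoid (R : seq A -> seq A -> Prop) (Delta : seq A) : Prop :=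
  [/\
      (forall a b c, mcong R (a ++ b) (a ++ c) -> mcong R b c) /\
      (forall a b c, mcong R (b ++ a) (c ++ a) -> mcong R b c),
      (* (2) Noetherian divisibility *)
      (exists lambda : seq A -> nat,
         [/\ forall a b, mcong R a b -> lambda a = lambda b,
             forall a b, lambda a + lambda b <= lambda (a ++ b)
           & forall a, ~ mcong R a [::] -> lambda a <> 0]),
      (forall a b, [/\ exists c, is_lcm (ldiv R) a b c,
                       exists c, is_lcm (rdiv R) a b c,
                       exists c, is_gcd (ldiv R) a b c &
                       exists c, is_gcd (rdiv R) a b c]),
      (forall x, ldiv R x Delta <-> rdiv R x Delta) /\
      (forall w, exists ws : seq (seq A),
          (forall x, x \in ws -> ldiv R x Delta) /\ mcong R w (flatten ws))
    &
      exists s : seq (seq A), forall x, ldiv R x Delta ->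
        exists2 y, y \in s & mcong R x y].

Definition group_of_fractions (R : seq A -> seq A -> Prop) : Prop :=
  (forall u v, gcong R (iota u) (iota v) -> mcong R u v) /\
  (forall g, exists a b, gcong R g (iota a ++ ginv (iota b))).
End Presented.

Definition gsubst (A B : eqType) (f : A -> seq (B * bool)) (w : seq (A * bool))
  : seq (B * bool) :=
  flatten (map (fun p => if p.2 then ginv (f p.1) else f p.1) w).

Definition pres_group_iso (A B : eqType) (R1 : seq A -> seq A -> Prop)
  (R2 : seq B -> seq B -> Prop) : Prop :=
  exists (f : A -> seq (B * bool)) (g : B -> seq (A * bool)),
    [/\ forall u v, gcong R1 u v -> gcong R2 (gsubst f u) (gsubst f v),
        forall u v, gcong R2 u v -> gcong R1 (gsubst g u) (gsubst g v),
        forall u, gcong R1 (gsubst g (gsubst f u)) u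
      & forall u, gcong R2 (gsubst f (gsubst g u)) u].

(** Generators: false = rho_1, true = rho_2. Relation of M(m):
    rho1 rho2^((m-1)/2) rho1 = rho2^((m+1)/2). *)
Definition BM_rel (m : nat) (u v : seq bool) : Prop :=
  u = [:: false] ++ nseq m.-1./2 true ++ [:: false] /\ v = nseq m.+1./2 true.

Definition BM_Delta (m : nat) : seq bool := nseq m true.

(** Artin-Tits group of type I_2(m): generators s = false, t = true,
    relation sts... (m letters) = tst... (m letters). *)
Definition alt (a : bool) (n : nat) : seq bool :=
  mkseq (fun i => if odd i then ~~ a else a) n.
Definition artin_I2_rel (m : nat) (u v : seq bool) : Prop :=
  u = alt false m /\ v = alt true m.

(** Write m = 2k+1 and Delta = r2^m; the argument works for
    every odd m.  Reading a
      letter is injective on reduced states, hence M(m) is right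
      cancellative; left cancellativity follows since the relation is
      invariant under word reversal.
    - The same automaton shows that two letters have a least common left
      multiple.  A general lemma (proved by induction on an additive
      weight) turns letter lcms plus right cancellation into lcms of any two
      words with a common multiple; powers of Delta are common multiples, and
      gcds are lcms of the finitely many common divisors.  Reversal gives the
      left-handed versions, and Garside axioms (4), (5) follow from the
      centrality of Delta.
    - Since Delta is central, the Ore-type map g |-> (numerator, number of
      inverse letters) shows that the presented group is the group of
      fractions of M(m).
    - Finally r1 |-> s, r2 |-> t s and s |-> r1, t |-> r2 r1^-1 are mutually
      inverse isomorphisms with the Artin-Tits group of type I_2(m). *)

From Pilot Require Import Defs.
From mathcomp Require Import all_boot.
From mathcomp Require Import zify.
From Stdlib Require Import Classical.
Set Implicit Arguments. Unset Strict Implicit. Unset Printing Implicit Defensive.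

Section PresentedMonoid.
Variable A : eqType.
Variable R : seq A -> seq A -> Prop.

Lemma mcong_ctx x y u v : mcong R u v -> mcong R (x ++ u ++ y) (x ++ v ++ y).
Proof.
have E t x' y' : x ++ (x' ++ t ++ y') ++ y = (x ++ x') ++ t ++ (y' ++ y).
  by rewrite !catA.
elim=> {u v} [u|u v _ IH|u v w _ IH1 _ IH2|x' y' u v H].
- exact: mcong_refl.
- exact: mcong_sym.
- exact: mcong_trans IH1 IH2.
- by rewrite !E; apply: mcong_rel.
Qed.

Lemma mcong_catl x u v : mcong R u v -> mcong R (x ++ u) (x ++ v).
Proof. by move=> H; have := mcong_ctx x [::] H; rewrite !cats0. Qed.

Lemma mcong_catr y u v : mcong R u v -> mcong R (u ++ y) (v ++ y).
Proof. exact: mcong_ctx [::] y u v. Qed.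

Lemma mcong_eq u v : u = v -> mcong R u v.
Proof. by move=> ->; apply: mcong_refl. Qed.

Lemma rdiv_refl u : rdiv R u u.
Proof. by exists [::]; apply: mcong_refl. Qed.

Lemma rdiv_nil u : rdiv R [::] u.
Proof. by exists u; rewrite cats0; apply: mcong_refl. Qed.

Lemma rdiv_suffix u r : rdiv R u (r ++ u).
Proof. by exists r; apply: mcong_refl. Qed.

Lemma rdiv_mcong u v : mcong R u v -> rdiv R u v.
Proof. by exists [::]. Qed.

Lemma rdiv_trans u v w : rdiv R u v -> rdiv R v w -> rdiv R u w.
Proof.
case=> p Hp [q Hq]; exists (q ++ p); rewrite -catA.
exact: mcong_trans (mcong_catl q Hp) Hq.
Qed.

Lemma rdiv_catr u v w : rdiv R u v -> rdiv R (u ++ w) (v ++ w).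
Proof. by case=> p Hp; exists p; rewrite catA; apply: mcong_catr. Qed.

End PresentedMonoid.

Lemma finite_restriction (T : eqType) (l : seq T) (P : T -> Prop) :
  exists ds : seq T, (forall d, d \in ds -> P d) /\ (forall d, d \in l -> P d -> d \in ds).
Proof.
elim: l => [|x l [ds [Hds Hl]]]; first by exists [::].
case: (classic (P x)) => Px.
  exists (x :: ds); split.
    by move=> d; rewrite inE => /orP [/eqP -> //|]; apply: Hds.
  by move=> d; rewrite !inE => /orP [-> //|Hd Pd]; rewrite Hl ?orbT.
exists ds; split=> // d; rewrite inE => /orP [/eqP -> //|Hd Pd]; exact: Hl.
Qed.

Section RightLcm.
Variable A : eqType.
Variable R : seq A -> seq A -> Prop.
Variable wt : seq A -> nat.
Hypothesis wt_cat : forall u v, wt (u ++ v) = wt u + wt v.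
Hypothesis wt_mcong : forall u v, mcong R u v -> wt u = wt v.
Hypothesis wt_letter : forall x, 0 < wt [:: x].
Hypothesis rcancel : forall u v w, mcong R (u ++ w) (v ++ w) -> mcong R u v.

Definition letter_lcm (x y : A) (X Y : seq A) :=
  mcong R (X ++ [:: x]) (Y ++ [:: y]) /\
  forall p q, mcong R (p ++ [:: x]) (q ++ [:: y]) ->
    exists r, mcong R (p ++ [:: x]) (r ++ X ++ [:: x]).

Definition has_rlcm u v := exists c, is_lcm (rdiv R) u v c.

Lemma rdiv_cancel q r W : rdiv R (q ++ W) (r ++ W) -> rdiv R q r.
Proof. by case=> s Hs; exists s; apply: (rcancel (w := W)); rewrite -catA. Qed.

Lemma common_multiple_factor x y X Y u v d : letter_lcm x y X Y ->
  rdiv R (rcons u x) d -> rdiv R (rcons v y) d ->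
  exists r, [/\ mcong R (r ++ X ++ [:: x]) d,
    rdiv R u (r ++ X), rdiv R X (r ++ X),
    rdiv R v (r ++ Y) & rdiv R Y (r ++ Y)].
Proof.
move=> [HXY Hmin] [s1 H1] [s2 H2].
rewrite -cats1 catA in H1; rewrite -cats1 catA in H2.
have [r Hr] := Hmin _ _ (mcong_trans H1 (mcong_sym H2)).
have E1 : mcong R (s1 ++ u) (r ++ X).
  by apply: (rcancel (w := [:: x])); rewrite -[(r ++ X) ++ _]catA.
have E2 : mcong R (s2 ++ v) (r ++ Y).
  apply: (rcancel (w := [:: y])); apply: mcong_trans H2 _.
  apply: mcong_trans (mcong_sym H1) _; apply: mcong_trans Hr _.
  by rewrite -catA; apply: mcong_catl.
exists r; split; [exact: mcong_trans (mcong_sym Hr) H1 | by exists s1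
  | exact: rdiv_suffix | by exists s2 | exact: rdiv_suffix].
Qed.

Lemma lcm_cofactor_divides u X c q r : is_lcm (rdiv R) u X c ->
  mcong R (q ++ X) c -> rdiv R u (r ++ X) -> rdiv R X (r ++ X) -> rdiv R q r.
Proof.
case=> _ _ Hmin Hq HuX HX.
exact: (rdiv_cancel (rdiv_trans (rdiv_mcong Hq) (Hmin _ HuX HX))).
Qed.

Lemma lcm_assemble x y X Y u v c1 c2 q1 q2 c3 : letter_lcm x y X Y ->
  is_lcm (rdiv R) u X c1 -> mcong R (q1 ++ X) c1 ->
  is_lcm (rdiv R) v Y c2 -> mcong R (q2 ++ Y) c2 ->
  is_lcm (rdiv R) q1 q2 c3 ->
  is_lcm (rdiv R) (rcons u x) (rcons v y) (c3 ++ X ++ [:: x]).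
Proof.
move=> HL Hc1 Hq1 Hc2 Hq2 [Hq13 Hq23 Hmin3].
have HXY := HL.1.
have Hux : rdiv R (rcons u x) (c1 ++ [:: x]).
  by rewrite -cats1; apply: rdiv_catr; case: Hc1.
have Hvy : rdiv R (rcons v y) (c2 ++ [:: y]).
  by rewrite -cats1; apply: rdiv_catr; case: Hc2.
split.
- apply: rdiv_trans Hux _; rewrite catA; apply: rdiv_catr.
  exact: rdiv_trans (rdiv_mcong (mcong_sym Hq1)) (rdiv_catr X Hq13).
- apply: rdiv_trans Hvy _; apply: rdiv_trans (rdiv_catr [:: y] _) _.
    exact: rdiv_trans (rdiv_mcong (mcong_sym Hq2)) (rdiv_catr Y Hq23).
  by rewrite -!catA; apply/rdiv_mcong/mcong_catl/mcong_sym.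
- move=> d Hud Hvd.
  have [r [Hr HuX HX HvY HY]] := common_multiple_factor HL Hud Hvd.
  have Q1 := lcm_cofactor_divides Hc1 Hq1 HuX HX.
  have Q2 := lcm_cofactor_divides Hc2 Hq2 HvY HY.
  case: (Hmin3 _ Q1 Q2) => t Ht; exists t; apply: mcong_trans Hr.
  by rewrite catA; apply: mcong_catr.
Qed.

Hypothesis letter_lcm_exists : forall x y : A, exists X Y, letter_lcm x y X Y.

Lemma rlcm_of_common_multiple u v z :
  rdiv R u z -> rdiv R v z -> has_rlcm u v.
Proof.
have [n] : exists n, wt z < n by exists (wt z).+1.
elim: n u v z => [//|n IH] u v z Hz.
case/lastP: u => [|u x] Hu.
  by exists v; split=> [||d _ //]; [apply: rdiv_nil | apply: rdiv_refl].
case/lastP: v => [|v y] Hv.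
  by exists (rcons u x); split=> [||d //]; [apply: rdiv_refl | apply: rdiv_nil].
have [X [Y HL]] := letter_lcm_exists x y.
have [r [Hr HuX HX HvY HY]] := common_multiple_factor HL Hu Hv.
have HwtX : wt z = wt r + wt X + wt [:: x] by rewrite -(wt_mcong Hr) !wt_cat addnA.
have HwtY : wt (r ++ X ++ [:: x]) = wt (r ++ Y ++ [:: y]).
  exact: wt_mcong (mcong_catl r HL.1).
have Hx := wt_letter x; have Hy := wt_letter y; rewrite !wt_cat in HwtY.
have [c1 Hc1] : has_rlcm u X by apply: (IH _ _ (r ++ X)) => //; rewrite wt_cat; lia.
have [c2 Hc2] : has_rlcm v Y by apply: (IH _ _ (r ++ Y)) => //; rewrite wt_cat; lia.
have [_ [q1 Hq1] _] := Hc1; have [_ [q2 Hq2] _] := Hc2.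
have Q1 := lcm_cofactor_divides Hc1 Hq1 HuX HX.
have Q2 := lcm_cofactor_divides Hc2 Hq2 HvY HY.
have [c3 Hc3] : has_rlcm q1 q2 by apply: (IH _ _ r) Q1 Q2; lia.
by exists (c3 ++ X ++ [:: x]); apply: lcm_assemble Hc1 Hq1 Hc2 Hq2 Hc3.
Qed.

Lemma common_divisors_lcm a b (ds : seq (seq A)) :
  (forall d, d \in ds -> rdiv R d a /\ rdiv R d b) ->
  exists c, [/\ rdiv R c a, rdiv R c b & forall d, d \in ds -> rdiv R d c].
Proof.
elim: ds => [|d ds IH] Hds.
  by exists [::]; split=> //; apply: rdiv_nil.
have [|c [Ha Hb Hc]] := IH; first by move=> d' Hd'; apply: Hds; rewrite inE Hd' orbT.
have [Hda Hdb] := Hds d (mem_head _ _).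
have [l [Hdl Hcl Hmin]] := rlcm_of_common_multiple Hda Ha.
exists l; split; [exact: Hmin | exact: Hmin |].
move=> d'; rewrite inE => /orP [/eqP -> // | Hd'].
exact: rdiv_trans (Hc _ Hd') Hcl.
Qed.

Hypothesis wt_finite : forall n, exists l : seq (seq A), forall w, wt w <= n -> w \in l.

(** The gcd of a and b is the lcm of their (finitely many) common divisors. *)
Lemma rgcd_exists a b : exists c, is_gcd (rdiv R) a b c.
Proof.
have [l Hl] := wt_finite (wt a).
have [ds [Hds Hl_ds]] := finite_restriction l (fun d => rdiv R d a /\ rdiv R d b).
have [c [Ha Hb Hc]] := common_divisors_lcm Hds.
exists c; split=> // d Hda Hdb; apply: Hc; apply: Hl_ds; last by split.
by apply: Hl; case: Hda => p /wt_mcong <-; rewrite wt_cat leq_addl.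
Qed.

End RightLcm.

(** A reversal-invariant relation presents a monoid isomorphic to its
    opposite, so left-handed properties follow from right-handed ones. *)
Section Reversal.
Variable A : eqType.
Variable R : seq A -> seq A -> Prop.
Hypothesis R_rev : forall u v, R u v -> R (rev u) (rev v).

Lemma mcong_rev u v : mcong R u v -> mcong R (rev u) (rev v).
Proof.
elim=> {u v} [u|u v _ IH|u v w _ IH1 _ IH2|x y u v H].
- exact: mcong_refl.
- exact: mcong_sym.
- exact: mcong_trans IH1 IH2.
- by rewrite !rev_cat -!catA; apply: mcong_rel; apply: R_rev.
Qed.

Lemma mcong_revE u v : mcong R (rev u) (rev v) -> mcong R u v.
Proof. by move/mcong_rev; rewrite !revK. Qed.

Lemma ldiv_rev a c : ldiv R a c <-> rdiv R (rev a) (rev c).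
Proof.
split=> [[b Hb]|[p Hp]].
  by exists (rev b); rewrite -rev_cat; apply: mcong_rev.
by exists (rev p); apply: mcong_revE; rewrite rev_cat revK.
Qed.

Lemma lcancel_of_rcancel :
  (forall u v w, mcong R (u ++ w) (v ++ w) -> mcong R u v) ->
  forall a b c, mcong R (a ++ b) (a ++ c) -> mcong R b c.
Proof.
move=> rcancel a b c /mcong_rev; rewrite !rev_cat => /rcancel.
exact: mcong_revE.
Qed.

Lemma llcm_of_rlcm a b :
  (exists c, is_lcm (rdiv R) (rev a) (rev b) c) -> exists c, is_lcm (ldiv R) a b c.
Proof.
case=> c [Hac Hbc Hmin]; exists (rev c).
split; rewrite ?ldiv_rev ?revK //.
by move=> d /ldiv_rev Had /ldiv_rev Hbd; apply/ldiv_rev; rewrite revK; apply: Hmin.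
Qed.

Lemma lgcd_of_rgcd a b :
  (exists c, is_gcd (rdiv R) (rev a) (rev b) c) -> exists c, is_gcd (ldiv R) a b c.
Proof.
case=> c [Hca Hcb Hmax]; exists (rev c).
split; rewrite ?ldiv_rev ?revK //.
by move=> d /ldiv_rev Hda /ldiv_rev Hdb; apply/ldiv_rev; rewrite revK; apply: Hmax.
Qed.

End Reversal.

Section PresentedGroup.
Variable A : eqType.
Variable R : seq A -> seq A -> Prop.

Lemma gcong_ctx x y u v : gcong R u v -> gcong R (x ++ u ++ y) (x ++ v ++ y).
Proof.
have E t x' y' : x ++ (x' ++ t ++ y') ++ y = (x ++ x') ++ t ++ (y' ++ y).
  by rewrite !catA.
elim=> {u v} [u|u v _ IH|u v w _ IH1 _ IH2|x' y' u v H|x' y' a b].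
- exact: gcong_refl.
- exact: gcong_sym.
- exact: gcong_trans IH1 IH2.
- by rewrite !E; apply: gcong_rel.
- rewrite E (_ : x ++ (x' ++ y') ++ y = (x ++ x') ++ (y' ++ y)).
    exact: gcong_free.
  by rewrite !catA.
Qed.

Lemma gcong_catl x u v : gcong R u v -> gcong R (x ++ u) (x ++ v).
Proof. by move=> H; have := gcong_ctx x [::] H; rewrite !cats0. Qed.

Lemma gcong_catr y u v : gcong R u v -> gcong R (u ++ y) (v ++ y).
Proof. exact: gcong_ctx [::] y u v. Qed.

Lemma gcong_eq u v : u = v -> gcong R u v.
Proof. by move=> ->; apply: gcong_refl. Qed.

Lemma iota_cat (u v : seq A) : Defs.iota (u ++ v) = Defs.iota u ++ Defs.iota v.
Proof. exact: map_cat. Qed.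

Lemma gcong_of_mcong u v : mcong R u v -> gcong R (Defs.iota u) (Defs.iota v).
Proof.
elim=> {u v} [u|u v _ IH|u v w _ IH1 _ IH2|x y u v H].
- exact: gcong_refl.
- exact: gcong_sym.
- exact: gcong_trans IH1 IH2.
- by rewrite !iota_cat; apply: gcong_rel.
Qed.

Lemma ginv_cat (u v : seq (A * bool)) : ginv (u ++ v) = ginv v ++ ginv u.
Proof. by rewrite /ginv map_cat rev_cat. Qed.

Lemma ginvK (u : seq (A * bool)) : ginv (ginv u) = u.
Proof.
rewrite /ginv map_rev -map_comp revK.
by rewrite -[RHS]map_id; apply: eq_map => -[a b] /=; rewrite negbK.
Qed.

Lemma mulgV (w : seq (A * bool)) : gcong R (w ++ ginv w) [::].
Proof.
elim: w => [|[a b] w IH]; first exact: gcong_refl.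
rewrite -cat1s ginv_cat (_ : ginv [:: (a, b)] = [:: (a, ~~ b)]) //.
rewrite -catA [w ++ _]catA; apply: gcong_trans (gcong_catl _ (gcong_catr _ IH)) _.
exact: (gcong_free R [::] [::] a b).
Qed.

Lemma mulVg (w : seq (A * bool)) : gcong R (ginv w ++ w) [::].
Proof. by have := mulgV (ginv w); rewrite ginvK. Qed.

Lemma gcong_ginv u v : gcong R u v -> gcong R (ginv u) (ginv v).
Proof.
move=> H; apply: gcong_trans (_ : gcong R (ginv u ++ (v ++ ginv v)) _).
  by rewrite -{1}[ginv u]cats0; apply/gcong_catl/gcong_sym/mulgV.
rewrite catA; apply: gcong_trans (gcong_catr _ (gcong_catl _ (gcong_sym H))) _.
exact: gcong_catr _ (mulVg u).
Qed.

End PresentedGroup.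

Lemma gsubst_cat (A B : eqType) (f : A -> seq (B * bool)) u v :
  gsubst f (u ++ v) = gsubst f u ++ gsubst f v.
Proof. by rewrite /gsubst map_cat flatten_cat. Qed.

Lemma gsubst_ginv (A B : eqType) (f : A -> seq (B * bool)) u :
  gsubst f (ginv u) = ginv (gsubst f u).
Proof.
elim: u => [|[a b] u IH] //.
rewrite -cat1s ginv_cat !gsubst_cat IH ginv_cat; congr (_ ++ _).
by case: b; rewrite /gsubst /= !cats0 ?ginvK.
Qed.

Lemma gsubst_comp (A B C : eqType) (f : A -> seq (B * bool)) (g : B -> seq (C * bool)) u :
  gsubst g (gsubst f u) = gsubst (fun a => gsubst g (f a)) u.
Proof.
elim: u => [|[a b] u IH] //.
rewrite -cat1s !gsubst_cat IH; congr (_ ++ _).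
by case: b; rewrite /gsubst /= !cats0 // -/(gsubst g _) gsubst_ginv.
Qed.

Lemma gsubst_gcong (A B : eqType) (R1 : seq A -> seq A -> Prop) (R2 : seq B -> seq B -> Prop)
    (f : A -> seq (B * bool)) :
  (forall u v, R1 u v -> gcong R2 (gsubst f (Defs.iota u)) (gsubst f (Defs.iota v))) ->
  forall u v, gcong R1 u v -> gcong R2 (gsubst f u) (gsubst f v).
Proof.
move=> Hf u v; elim=> {u v} [u|u v _ IH|u v w _ IH1 _ IH2|x y u v H|x y a b].
- exact: gcong_refl.
- exact: gcong_sym.
- exact: gcong_trans IH1 IH2.
- by rewrite !gsubst_cat; apply/gcong_ctx/Hf.
- rewrite !gsubst_cat -[gsubst f x ++ gsubst f y]/(gsubst f x ++ [::] ++ gsubst f y).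
  apply: gcong_ctx; rewrite /gsubst /= cats0.
  by case: b => /=; [apply: mulVg | apply: mulgV].
Qed.

Lemma gsubst_fixed (A : eqType) (R : seq A -> seq A -> Prop) (h : A -> seq (A * bool)) :
  (forall a, gcong R (h a) [:: (a, false)]) -> forall u, gcong R (gsubst h u) u.
Proof.
move=> Hh; elim=> [|[a b] u IH]; first exact: gcong_refl.
rewrite -cat1s gsubst_cat; apply: gcong_trans (gcong_catl _ IH) _.
apply: gcong_catr; rewrite /gsubst /= cats0.
by case: b => //; apply: (gcong_ginv (Hh a)).
Qed.

Section BraidMonoid.
Variable k : nat.
Local Notation m := (k.*2.+1).
Local Notation R := (BM_rel (k.*2.+1)).
Local Notation lhs := ([:: false] ++ nseq k true ++ [:: false]).
Local Notation rhs := (nseq k.+1 true).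
Local Notation Delta := (nseq m true).

Lemma BM_relE u v : R u v <-> u = lhs /\ v = rhs.
Proof.
by rewrite /BM_rel (_ : (k.*2.+1).-1./2 = k) /= ?half_double // -doubleS half_double.
Qed.

Lemma mcong_relation x y u v :
  u = x ++ lhs ++ y -> v = x ++ rhs ++ y -> mcong R u v.
Proof. by move=> -> ->; apply: mcong_rel; apply/BM_relE. Qed.

Lemma nseqSr n : nseq n.+1 true = nseq n true ++ [:: true].
Proof. by rewrite -addn1 nseqD. Qed.

Lemma Delta_split : Delta = nseq k true ++ rhs.
Proof. by rewrite -nseqD addnS addnn. Qed.

(** Delta commutes with r1:
    r1 Delta = r1 r2^k r2^(k+1) = r1 r2^k r1 r2^k r1 = r2^(k+1) r2^k r1. *)
Lemma Delta_central_letter x : mcong R ([:: x] ++ Delta) (Delta ++ [:: x]).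
Proof.
case: x; first by rewrite -nseqSr; apply: mcong_refl.
rewrite Delta_split.
apply: mcong_trans (_ : mcong R ([:: false] ++ nseq k true ++ lhs) _).
  by apply: mcong_sym; apply: (mcong_relation (x := [:: false] ++ nseq k true) (y := [::]));
     rewrite ?cats0 -!catA.
apply: (mcong_relation (x := [::]) (y := nseq k true ++ [:: false])).
  by rewrite /= -!catA.
by rewrite -!catA !catA -!nseqD addnS addSn.
Qed.

Lemma Delta_central w : mcong R (w ++ Delta) (Delta ++ w).
Proof.
elim: w => [|x w IH]; first by rewrite cats0; apply: mcong_refl.
rewrite -cat1s -catA; apply: mcong_trans (mcong_catl _ IH) _.
by rewrite !catA; apply: mcong_catr; apply: Delta_central_letter.
Qed.

Definition compl (c : bool) :=
  if c then nseq k.*2 true else nseq k true ++ false :: nseq k true.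

Lemma compl_r c : mcong R ([:: c] ++ compl c) Delta.
Proof.
case: c; first exact: mcong_refl.
rewrite Delta_split; apply: (mcong_relation (x := [::]) (y := nseq k true)).
  by rewrite /= -catA.
by rewrite -!nseqD addnC.
Qed.

Lemma compl_l c : mcong R (compl c ++ [:: c]) Delta.
Proof.
case: c; first by rewrite -nseqSr; apply: mcong_refl.
rewrite Delta_split; apply: (mcong_relation (x := nseq k true) (y := [::])).
  by rewrite cats0 -catA.
by rewrite cats0.
Qed.

(** A state (e, [:: e_n; ...; e_1]) stands for the word
    r2^e (r1 r2^e_1) ... (r1 r2^e_n); it is reduced when all e_i < m and
    e_i <> k for i < n.  Letters are read on the right of the word. *)
Definition state := (nat * seq nat)%type.
Definition block e := false :: nseq e true.
Definition state_word (S : state) : seq bool :=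
  nseq S.1 true ++ flatten (map block (rev S.2)).

Definition reduced (S : state) :=
  all (fun e => e < m) S.2 && all (fun e => e != k) (behead S.2).

(** Appending r2: a full block r1 r2^(m-1) r2 = r1 Delta becomes Delta r1. *)
Definition push_r2 (S : state) : state :=
  let: (e0, L) := S in
  match L with
  | [::] => (e0.+1, [::])
  | e :: L' => if e.+1 == m then (e0 + m, 0 :: L') else (e0, e.+1 :: L')
  end.

(** Appending r1: the relation rewrites r1 r2^k r1 into r2^(k+1), which
    merges with the previous block (subtracting Delta if it overflows). *)
Definition push_r1 (S : state) : state :=
  let: (e0, L) := S in
  match L with
  | [::] => (e0, [:: 0])
  | e :: L' =>
    if e == k then
      match L' with
      | [::] => (e0 + k.+1, [::])
      | e' :: L'' => if e' + k.+1 < m then (e0, (e' + k.+1) :: L'')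
                     else (e0 + m, (e' + k.+1 - m) :: L'')
      end
    else (e0, 0 :: e :: L')
  end.

Definition push (S : state) (l : bool) := if l then push_r2 S else push_r1 S.
Definition read (S : state) (w : seq bool) := foldl push S w.
Definition normal_form w := read (0, [::]) w.

Lemma state_word_cons e0 e L : state_word (e0, e :: L) = state_word (e0, L) ++ block e.
Proof. by rewrite /state_word /= rev_cons -cats1 map_cat flatten_cat /= cats0 catA. Qed.

Lemma state_word_addm e0 L : state_word (e0 + m, L) = Delta ++ state_word (e0, L).
Proof. by rewrite /state_word /= addnC nseqD catA. Qed.

Lemma read_cat S u v : read S (u ++ v) = read (read S u) v.
Proof. exact: foldl_cat. Qed.

Lemma state_word_push S l : mcong R (state_word (push S l)) (state_word S ++ [:: l]).
Proof.
case: S => e0 L; case: l => /=.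
- case: L => [|e L] /=.
    by apply: mcong_eq; rewrite /state_word /= !cats0 -nseqSr.
  rewrite !state_word_cons /block; case: ifP => /eqP He.
    rewrite state_word_addm state_word_cons -catA.
    apply: mcong_trans (mcong_sym (Delta_central _)) _.
    by apply: mcong_eq; rewrite -!catA cat_cons -nseqSr He.
  by apply: mcong_eq; rewrite state_word_cons -catA cat_cons -nseqSr.
- case: L => [|e L] /=; first by apply: mcong_eq; rewrite /state_word /= cats0.
  case: ifP => /eqP He; last by apply: mcong_eq; rewrite !state_word_cons -catA.
  rewrite state_word_cons He -catA /block.
  case: L => [|e' L].
    apply: mcong_sym; apply: (mcong_relation (x := state_word (e0, [::])) (y := [::])).
      by rewrite cats0.
    by rewrite /state_word /= !cats0 nseqD.
  have merge : mcong R (state_word (e0, e' :: L) ++ [:: false] ++ nseq k true ++ [:: false])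
                       (state_word (e0, L) ++ false :: nseq (e' + k.+1) true).
    apply: (mcong_relation (x := state_word (e0, L) ++ false :: nseq e' true) (y := [::])).
      by rewrite state_word_cons /block !cats0 -!catA.
    by rewrite cats0 nseqD -!catA.
  apply: mcong_sym; apply: mcong_trans merge _.
  case: ifP => Hlt; first by apply: mcong_eq; rewrite state_word_cons.
  have -> : e' + k.+1 = m + (e' + k.+1 - m) by lia.
  rewrite state_word_addm state_word_cons /block nseqD addKn -cat1s !catA.
  apply: mcong_trans (mcong_catr _ (Delta_central _)) _.
  by apply: mcong_eq; rewrite -!catA.
Qed.

Lemma state_word_read S w : mcong R (state_word (read S w)) (state_word S ++ w).
Proof.
elim: w S => [|l w IH] S /=; first by rewrite cats0; apply: mcong_refl.
apply: mcong_trans (IH _) _; rewrite -cat1s catA; apply: mcong_catr.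
exact: state_word_push.
Qed.

Lemma state_word_nf w : mcong R (state_word (normal_form w)) w.
Proof. exact: state_word_read. Qed.

Lemma reduced_push S l : reduced S -> reduced (push S l).
Proof.
case: S => e0 L; rewrite /reduced; case: l => /=; case: L => [|e L] //=.
- by case/andP=> /andP [He Ha] Hb; case: ifP => /eqP Hm /=; rewrite ?Ha ?Hb ?andbT; lia.
- case/andP=> /andP [He Ha] Hb; case: ifP => /eqP Hk /=.
    case: L Ha Hb => [|e' L] //= /andP [He' Ha] /andP [Hk' Hb].
    by case: ifP => Hl /=; rewrite Ha Hb ?andbT; lia.
  by rewrite He Ha Hb /=; apply/eqP; lia.
Qed.

Lemma reduced_read S w : reduced S -> reduced (read S w).
Proof. by elim: w S => [|l w IH] S //= H; apply/IH/reduced_push. Qed.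

Lemma reduced_nf w : reduced (normal_form w).
Proof. exact: reduced_read. Qed.

Lemma read_r1 S : read S [:: false] = push_r1 S.
Proof. by []. Qed.

Lemma read_r2_nil e0 j : read (e0, [::]) (nseq j true) = (e0 + j, [::]).
Proof. by elim: j e0 => [|j IH] e0 /=; rewrite ?addn0 // IH addSnnS. Qed.

Lemma read_r2 e0 e L j : e < m -> e + j < m.*2 ->
  read (e0, e :: L) (nseq j true) =
  if e + j < m then (e0, (e + j) :: L) else (e0 + m, (e + j - m) :: L).
Proof.
elim: j e0 e => [|j IH] e0 e He Hj /=; first by rewrite addn0 He.
case: ifP => /eqP Hfull; last by rewrite IH ?addSnnS //; lia.
rewrite IH; try lia.
have -> : (0 + j < m) = true by apply/idP; lia.
have -> : (e + j.+1 < m) = false by apply/negbTE; lia.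
by congr (_, _ :: _); lia.
Qed.

(** Both sides of the relation act identically on a reduced state whose top
    block is r1 r2^k: reading [rhs] turns it into r1 r2^m = Delta r1, while
    reading [lhs] merges it into the block below, whose exponent grows by
    2k+1 = m, and then opens a new block. *)
Lemma read_relation_top e0 L : reduced (e0, k :: L) ->
  read (e0, k :: L) lhs = read (e0, k :: L) rhs.
Proof.
case/andP=> /andP [_ Ha] Hb; rewrite /= in Hb.
rewrite read_cat [RHS]read_r2; try lia.
rewrite (_ : (k + k.+1 < m) = false); last by apply/negbTE; lia.
rewrite read_cat /= eqxx.
case: L Ha Hb => [|e' L] /= Ha Hb.
  by rewrite read_r2_nil; congr (_, [:: _]); lia.
case/andP: Ha => He' _; case/andP: Hb => Hk' _.
case: ifP => Hl.
  rewrite read_r2; try lia.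
  rewrite (_ : (e' + k.+1 + k < m) = false); last by apply/negbTE; lia.
  rewrite /= (_ : e' + k.+1 + k - m = e'); last by lia.
  by rewrite (negbTE Hk'); congr (_, _ :: _); lia.
rewrite read_r2; try lia.
rewrite (_ : (e' + k.+1 - m + k < m) = true); last by apply/idP; lia.
rewrite /= (_ : e' + k.+1 - m + k = e'); last by lia.
by rewrite (negbTE Hk'); congr (_, _ :: _); lia.
Qed.

(** The automaton respects the defining relation on reduced states;
    when the top exponent is not k, the first r1 opens a new block. *)
Lemma read_relation S : reduced S -> read S lhs = read S rhs.
Proof.
case: S => e0 [|e L] HV.
  rewrite [RHS]read_r2_nil !read_cat !read_r1 /= read_r2; try lia.
  by rewrite add0n (_ : k < m) /= ?eqxx //; lia.
case: (eqVneq e k) HV => [-> | Hk HV]; first exact: read_relation_top.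
case/andP: HV => /andP [He _] _.
rewrite [RHS]read_r2; try lia.
rewrite !read_cat !read_r1 /= (negbTE Hk) read_r2; try lia.
by rewrite add0n (_ : k < m) /= ?eqxx //; lia.
Qed.

Definition pop (S : state) (l : bool) : state :=
  let: (e0, L) := S in
  if l then
    match L with
    | [::] => (e0.-1, [::])
    | e :: L' => if e == 0 then (e0 - m, m.-1 :: L') else (e0, e.-1 :: L')
    end
  else
    match L with
    | [::] => (e0 - k.+1, [:: k])
    | e :: L' => if e == 0 then (e0, L')
                 else if k < e then (e0, k :: (e - k.+1) :: L')
                 else (e0 - m, k :: (e + k) :: L')
    end.

Lemma pop_push S l : reduced S -> pop (push S l) l = S.
Proof.
case: S => e0 L; rewrite /reduced; case: l => /=; case: L => [|e L] //=.
- by case/andP=> /andP [He _] _; case: ifP => /eqP Hm //=; congr (_, _ :: _); lia.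
- case/andP=> /andP [He Ha] Hb; case: ifP => /eqP Hk //.
  case: L Ha Hb => [|e' L] /= Ha Hb; first by rewrite addnK Hk.
  case/andP: Ha => He' _; case/andP: Hb => /eqP Hk' _.
  case: ifP => Hl /=.
    rewrite (_ : (e' + k.+1 == 0) = false); last by apply/negbTE; lia.
    by rewrite (_ : k < e' + k.+1) ?Hk ?addnK //; lia.
  rewrite (_ : (e' + k.+1 - m == 0) = false); last by apply/negbTE; lia.
  rewrite (_ : (k < e' + k.+1 - m) = false); last by apply/negbTE; lia.
  by rewrite addnK Hk; congr (_, _ :: _ :: _); lia.
Qed.

Lemma read_inj S1 S2 w : reduced S1 -> reduced S2 -> read S1 w = read S2 w -> S1 = S2.
Proof.
elim: w S1 S2 => [|l w IH] S1 S2 V1 V2 //= E.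
rewrite -(pop_push l V1) -(pop_push l V2).
by congr pop; apply: IH E; apply: reduced_push.
Qed.

Lemma nf_mcong u v : mcong R u v -> normal_form u = normal_form v.
Proof.
elim=> {u v} [u|u v _ IH|u v w _ IH1 _ IH2|x y u v /BM_relE [-> ->]] //.
- by rewrite IH1 IH2.
- rewrite /normal_form !(read_cat _ x) !(read_cat _ _ y) read_relation //.
  exact: reduced_nf.
Qed.

Lemma mcong_nf u v : normal_form u = normal_form v -> mcong R u v.
Proof.
move=> E; apply: mcong_trans (mcong_sym (state_word_nf u)) _.
by rewrite E; apply: state_word_nf.
Qed.

Lemma BM_rcancel u v w : mcong R (u ++ w) (v ++ w) -> mcong R u v.
Proof.
move/nf_mcong; rewrite /normal_form !read_cat => E; apply: mcong_nf.
exact: read_inj (reduced_nf u) (reduced_nf v) E.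
Qed.

(** The state word of S visibly ends with r2^(k+1). *)
Definition ends_with_rhs (S : state) :=
  (S.2 = [::] /\ k < S.1) \/ (exists e L, S.2 = e :: L /\ (k < e \/ m <= S.1)).

Lemma ends_with_rhs_read S : reduced S -> ends_with_rhs S -> exists T, read T rhs = S.
Proof.
case: S => s0 L V H; rewrite /reduced /ends_with_rhs /= in V H.
case: H => [[E H]|[e [L' [E H]]]]; subst L.
  by exists (s0 - k.+1, [::]); rewrite read_r2_nil; congr (_, _); lia.
case/andP: V => /andP [He _] _.
case: (ltnP k e) => Hke.
  exists (s0, (e - k.+1) :: L'); rewrite read_r2; try lia.
  by rewrite (_ : e - k.+1 + k.+1 < m); [congr (_, _ :: _)|]; lia.
have Hs : m <= s0 by case: H => //; lia.
exists (s0 - m, (e + k) :: L'); rewrite read_r2; try lia.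
rewrite (_ : (e + k + k.+1 < m) = false); last by apply/negbTE; lia.
by congr (_, _ :: _); lia.
Qed.

Lemma push_r1_shape P : let S := push_r1 P in
  (S.2 = [::] /\ k < S.1) \/
  (exists e L, S.2 = e :: L /\ (e = 0 \/ k < e \/ m <= S.1)).
Proof.
case: P => p0 [|e L] /=; first by right; exists 0, [::]; auto.
case: ifP => _; last by right; exists 0, [:: e & L]; auto.
case: L => [|e' L] /=; first by left; split=> //; lia.
case: ifP => Hl /=.
  by right; exists (e' + k.+1), L; split=> //; right; left; lia.
by right; exists (e' + k.+1 - m), L; split=> //; right; right; lia.
Qed.

Lemma push_r2_shape Q : let S := push_r2 Q in
  (S.2 = [::] /\ 0 < S.1) \/ (exists e L, S.2 = e :: L /\ (0 < e \/ m <= S.1)).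
Proof.
case: Q => q0 [|e L] /=; first by left.
case: ifP => _ /=; first by right; exists 0, L; split=> //; right; lia.
by right; exists e.+1, L; split=> //; left.
Qed.

Lemma push_r1_r2 P Q : push_r1 P = push_r2 Q -> ends_with_rhs (push_r1 P).
Proof.
move=> E; have := push_r1_shape P; have := push_r2_shape Q; rewrite /= -E.
move=> [[H1 H2]|[e [L [H1 H2]]]] [[H3 H4]|[e' [L' [H3 H4]]]].
- by left.
- by rewrite H1 in H3.
- by rewrite H1 in H3.
- rewrite H1 in H3; case: H3 H4 => <- _ H4; right; exists e, L; split=> //.
  by case: H4 => [E0|[H5|H5]]; [subst e; case: H2 => //; right | left | right].
Qed.

Lemma common_multiple_r1_r2 p q : mcong R (p ++ [:: false]) (q ++ [:: true]) ->
  exists r, mcong R (p ++ [:: false]) (r ++ rhs).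
Proof.
move/nf_mcong; rewrite /normal_form !read_cat /= => E.
have [T HT] : exists T, read T rhs = push_r1 (normal_form p).
  by apply: ends_with_rhs_read; [apply: (reduced_push false); apply: reduced_nf
                                 | apply: push_r1_r2 E].
exists (state_word T); apply: mcong_trans (mcong_sym (state_word_nf _)) _.
by rewrite /normal_form read_cat /= -HT; apply: state_word_read.
Qed.

(** Letter lcms: r1 r2^k r1 = r2^k r2 for r1, r2 and the empty cofactors
    for equal letters. *)
Lemma BM_letter_lcm x y : exists X Y, letter_lcm R x y X Y.
Proof.
have Hrel : mcong R lhs rhs.
  by apply: (mcong_relation (x := [::]) (y := [::])); rewrite cats0.
have same_letter z : letter_lcm R z z [::] [::].
  by split=> [|p q _]; [apply: mcong_refl | exists p; apply: mcong_refl].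
case: x; case: y; try by exists [::], [::]; apply: same_letter.
- exists (nseq k true), ([:: false] ++ nseq k true); split.
    by rewrite -nseqSr -catA; apply: mcong_sym.
  move=> p q /mcong_sym H; have [r Hr] := common_multiple_r1_r2 H.
  exists r; apply: mcong_trans (mcong_sym H) (mcong_trans Hr _).
  by apply: mcong_eq; rewrite nseqSr.
- exists ([:: false] ++ nseq k true), (nseq k true); split.
    by rewrite -nseqSr -catA.
  move=> p q H; have [r Hr] := common_multiple_r1_r2 H.
  exists r; apply: mcong_trans Hr _; apply: mcong_catl; rewrite -catA.
  exact: mcong_sym.
Qed.

Definition weight (w : seq bool) := size w + count id w.

Lemma weight_cat u v : weight (u ++ v) = weight u + weight v.
Proof. rewrite /weight size_cat count_cat; lia. Qed.

Lemma weight_mcong u v : mcong R u v -> weight u = weight v.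
Proof.
elim=> {u v} [u|u v _ IH|u v w _ IH1 _ IH2|x y u v /BM_relE [-> ->]] //.
- by rewrite IH1.
- rewrite !weight_cat /weight /= !size_nseq !count_nseq /= mul1n; lia.
Qed.

Lemma weight_letter x : 0 < weight [:: x].
Proof. by case: x. Qed.

Lemma size_weight w : size w <= weight w.
Proof. exact: leq_addr. Qed.

Fixpoint words_upto n : seq (seq bool) :=
  if n is n'.+1 then
    [::] :: map (cons true) (words_upto n') ++ map (cons false) (words_upto n')
  else [:: [::]].

Lemma words_uptoP n w : size w <= n -> w \in words_upto n.
Proof.
elim: n w => [|n IH] [|x w] //= H; rewrite inE mem_cat.
by case: x; rewrite (map_f _ (IH _ H)) ?orbT.
Qed.

Lemma weight_finite n : exists l : seq (seq bool), forall w, weight w <= n -> w \in l.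
Proof.
exists (words_upto n) => w H; apply: words_uptoP.
exact: leq_trans (size_weight w) H.
Qed.

(** The defining relation is a palindrome. *)
Lemma BM_rel_rev u v : R u v -> R (rev u) (rev v).
Proof.
move/BM_relE=> [-> ->]; apply/BM_relE; split; last by rewrite rev_nseq.
by rewrite !rev_cat rev_nseq -catA.
Qed.

Definition Delta_pow n := nseq (m * n) true.

Lemma Delta_powS n : Delta_pow n.+1 = Delta ++ Delta_pow n.
Proof. by rewrite /Delta_pow mulnS nseqD. Qed.

Lemma Delta_powD a b : Delta_pow a ++ Delta_pow b = Delta_pow (a + b).
Proof. by rewrite /Delta_pow -nseqD mulnDr. Qed.

(** Any word u right-divides Delta^|u|: u = c_1 ... c_n divides
    c_n* ... c_1* c_1 ... c_n = Delta^n, since Delta is central. *)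
Lemma rdiv_Delta_pow u : rdiv R u (Delta_pow (size u)).
Proof.
elim: u => [|x u [p Hp]]; first exact: rdiv_nil.
exists (p ++ compl x); rewrite Delta_powS.
apply: mcong_trans (_ : mcong R (p ++ (compl x ++ [:: x]) ++ u) _).
  by apply: mcong_eq; rewrite -!catA.
apply: mcong_trans (mcong_catl _ (mcong_catr _ (compl_l x))) _.
apply: mcong_trans (mcong_catl _ (mcong_sym (Delta_central _))) _.
rewrite catA; apply: mcong_trans (mcong_catr _ Hp) _.
by apply: mcong_eq; rewrite /Delta_pow -!nseqD addnC.
Qed.

(** Any two elements have a common multiple, a power of Delta, hence a
    right lcm; right gcds exist as well. *)
Lemma BM_rlcm a b : exists c, is_lcm (rdiv R) a b c.
Proof.
apply: (rlcm_of_common_multiple weight_cat weight_mcong weight_letter BM_rcancel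
          BM_letter_lcm (z := Delta_pow (size a + size b))).
  by apply: rdiv_trans (rdiv_Delta_pow a) _; rewrite addnC -Delta_powD; apply: rdiv_suffix.
by apply: rdiv_trans (rdiv_Delta_pow b) _; rewrite -Delta_powD; apply: rdiv_suffix.
Qed.

Lemma BM_rgcd a b : exists c, is_gcd (rdiv R) a b c.
Proof.
exact: (rgcd_exists weight_cat weight_mcong weight_letter BM_rcancel
          BM_letter_lcm weight_finite).
Qed.

Lemma BM_lcancel a b c : mcong R (a ++ b) (a ++ c) -> mcong R b c.
Proof. exact: (lcancel_of_rcancel (@BM_rel_rev) (@BM_rcancel)). Qed.

Lemma Delta_divisors x : ldiv R x Delta <-> rdiv R x Delta.
Proof.
split=> [[y Hy]|[y Hy]]; exists y.
  apply: (BM_lcancel (a := x)); rewrite catA.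
  apply: mcong_trans (mcong_catr _ Hy) (mcong_sym (Delta_central _)).
apply: (BM_rcancel (w := x)); rewrite -catA.
exact: mcong_trans (mcong_catl _ Hy) (Delta_central _).
Qed.

Lemma Delta_divisors_generate w : exists ws : seq (seq bool),
  (forall x, x \in ws -> ldiv R x Delta) /\ mcong R w (flatten ws).
Proof.
exists [seq [:: l] | l <- w]; split.
  by move=> x /mapP [l _ ->]; exists (compl l); apply: compl_r.
by apply: mcong_eq; elim: w => //= l w <-.
Qed.

(** Divisors of Delta are among the words of weight at most 2m. *)
Lemma Delta_divisors_finite : exists s : seq (seq bool),
  forall x, ldiv R x Delta -> exists2 y, y \in s & mcong R x y.
Proof.
exists (words_upto (weight Delta)) => x [y Hy]; exists x; last exact: mcong_refl.
apply: words_uptoP; apply: leq_trans (size_weight x) _.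
by rewrite -(weight_mcong Hy) weight_cat leq_addr.
Qed.

(** Garside axioms (1)-(5), the weight serving as the Noetherian function. *)
Theorem BM_garside : garside_monoid R Delta.
Proof.
split.
- by split=> a b c; [exact: BM_lcancel | exact: BM_rcancel].
- exists weight; split=> [a b|a b|[|x a] H]; rewrite ?weight_cat //.
  + exact: weight_mcong.
  + by case: H; apply: mcong_refl.
- move=> a b; split; [| exact: BM_rlcm | | exact: BM_rgcd].
    by apply: (llcm_of_rlcm BM_rel_rev); apply: BM_rlcm.
  by apply: (lgcd_of_rgcd BM_rel_rev); apply: BM_rgcd.
- by split; [exact: Delta_divisors | exact: Delta_divisors_generate].
- exact: Delta_divisors_finite.
Qed.

(** Group of fractions.  A group word g = c_1^(e_1) ... c_n^(e_n) equals
    [numerator g] Delta^-(inv_count g), where c^-1 = c* Delta^-1. *)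
Definition numerator (g : seq (bool * bool)) :=
  flatten [seq if l.2 then compl l.1 else [:: l.1] | l <- g].
Definition inv_count (g : seq (bool * bool)) := count snd g.

Lemma numerator_cat g h : numerator (g ++ h) = numerator g ++ numerator h.
Proof. by rewrite /numerator map_cat flatten_cat. Qed.

Lemma inv_count_cat g h : inv_count (g ++ h) = inv_count g + inv_count h.
Proof. exact: count_cat. Qed.

Lemma numerator_iota u : numerator (Defs.iota u) = u.
Proof. by elim: u => //= c u IH; rewrite -cat1s numerator_cat IH. Qed.

Lemma inv_count_iota u : inv_count (Defs.iota u) = 0.
Proof. by elim: u. Qed.

(** Equality of fractions a Delta^-i = b Delta^-j, i.e. a Delta^j = b Delta^i. *)
Definition frac_equiv g h :=
  mcong R (numerator g ++ Delta_pow (inv_count h)) (numerator h ++ Delta_pow (inv_count g)).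

Lemma frac_equiv_trans g h f : frac_equiv g h -> frac_equiv h f -> frac_equiv g f.
Proof.
rewrite /frac_equiv => Hgh Hhf; apply: (BM_rcancel (w := Delta_pow (inv_count h))).
have swap a i j : a ++ Delta_pow i ++ Delta_pow j = a ++ Delta_pow j ++ Delta_pow i.
  by rewrite !Delta_powD addnC.
rewrite -!catA swap catA; apply: mcong_trans (mcong_catr _ Hgh) _.
rewrite -!catA swap catA; apply: mcong_trans (mcong_catr _ Hhf) _.
by apply: mcong_eq; rewrite -!catA swap.
Qed.

(** A cancelling pair c c^-1 or c^-1 c contributes exactly one Delta. *)
Lemma frac_equiv_free x y a b :
  frac_equiv (x ++ [:: (a, b); (a, ~~ b)] ++ y) (x ++ y).
Proof.
rewrite /frac_equiv !numerator_cat !inv_count_cat.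
have -> : inv_count [:: (a, b); (a, ~~ b)] = 1 by case: b.
have : mcong R (numerator [:: (a, b); (a, ~~ b)]) Delta.
  by case: b; rewrite /numerator /= ?cats0; [exact: compl_l | exact: compl_r].
move: (numerator _) => P HP; rewrite -!catA; apply: mcong_catl.
apply: mcong_trans (mcong_catr _ HP) _.
rewrite addnCA add1n Delta_powS !catA; apply: mcong_catr.
exact: mcong_sym (Delta_central _).
Qed.

Lemma frac_equiv_gcong g h : gcong R g h -> frac_equiv g h.
Proof.
elim=> {g h} [g|g h _ IH|g h f _ IH1 _ IH2|x y u v H|x y a b].
- exact: mcong_refl.
- exact: mcong_sym.
- exact: frac_equiv_trans IH1 IH2.
- rewrite /frac_equiv !numerator_cat !inv_count_cat !numerator_iota !inv_count_iota -!catA.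
  exact: mcong_rel H.
- exact: frac_equiv_free.
Qed.

Lemma BM_embeds u v : gcong R (Defs.iota u) (Defs.iota v) -> mcong R u v.
Proof.
move/frac_equiv_gcong; rewrite /frac_equiv !numerator_iota !inv_count_iota.
by rewrite /Delta_pow muln0 !cats0.
Qed.

Local Notation iDelta := (Defs.iota Delta).

Lemma inv_letter c : gcong R [:: (c, true)] (Defs.iota (compl c) ++ ginv iDelta).
Proof.
apply: gcong_trans (_ : gcong R ([:: (c, true)] ++ (iDelta ++ ginv iDelta)) _).
  by rewrite -{1}[[:: (c, true)]]cats0; apply/gcong_catl/gcong_sym/mulgV.
apply: gcong_trans (_ : gcong R ([:: (c, true)] ++
                          (Defs.iota ([:: c] ++ compl c) ++ ginv iDelta)) _).
  by apply/gcong_catl/gcong_catr/gcong_of_mcong/mcong_sym/compl_r.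
exact: (gcong_free R [::] _ c true).
Qed.

Lemma Delta_inv_central a : gcong R (ginv iDelta ++ Defs.iota a) (Defs.iota a ++ ginv iDelta).
Proof.
apply: gcong_trans (_ : gcong R (ginv iDelta ++ Defs.iota a ++ (iDelta ++ ginv iDelta)) _).
  by rewrite -{1}[Defs.iota a]cats0; apply/gcong_catl/gcong_catl/gcong_sym/mulgV.
apply: gcong_trans (_ : gcong R (ginv iDelta ++ (iDelta ++ Defs.iota a) ++ ginv iDelta) _).
  apply: gcong_catl; rewrite catA; apply: gcong_catr.
  by rewrite -!iota_cat; apply/gcong_of_mcong/Delta_central.
rewrite !catA; exact: gcong_catr _ (gcong_catr _ (mulVg R iDelta)).
Qed.

Lemma BM_fractions g : exists a b, gcong R g (Defs.iota a ++ ginv (Defs.iota b)).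
Proof.
elim: g => [|[c s] g [a [b IH]]]; first by exists [::], [::]; apply: gcong_refl.
rewrite -cat1s; case: s.
  exists (compl c ++ a), (b ++ Delta).
  apply: gcong_trans (gcong_catl _ IH) _.
  apply: gcong_trans (gcong_catr _ (inv_letter c)) _.
  rewrite !iota_cat ginv_cat -!catA; apply: gcong_catl; rewrite !catA; apply: gcong_catr.
  exact: Delta_inv_central.
by exists (c :: a), b; exact: gcong_catl IH.
Qed.

Theorem BM_group_of_fractions : group_of_fractions R.
Proof. by split; [exact: BM_embeds | exact: BM_fractions]. Qed.

Local Notation R2 := (artin_I2_rel (k.*2.+1)).

Lemma altSS a n : alt a n.+2 =
  alt a n ++ [:: (if odd n then ~~ a else a); (if odd n.+1 then ~~ a else a)].
Proof. by rewrite /alt /mkseq -addn2 iotaD map_cat. Qed.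

Lemma flatten_nseqSr (x : seq bool) j : flatten (nseq j.+1 x) = flatten (nseq j x) ++ x.
Proof. by rewrite -[j.+1]addn1 nseqD flatten_cat /= cats0. Qed.

Lemma alt_false_odd j : alt false j.*2.+1 = false :: flatten (nseq j [:: true; false]).
Proof.
elim: j => [//|j IH]; rewrite doubleS altSS IH /= odd_double /=.
by rewrite -flatten_nseqSr.
Qed.

Lemma alt_true_odd j : alt true j.*2.+1 = flatten (nseq j [:: true; false]) ++ [:: true].
Proof.
elim: j => [//|j IH]; rewrite doubleS altSS IH /= odd_double /= -catA.
by rewrite -[RHS]/(flatten (nseq j.+1 [:: true; false]) ++ [:: true]) flatten_nseqSr -catA.
Qed.

Definition to_artin (c : bool) : seq (bool * bool) :=
  if c then [:: (true, false); (false, false)] else [:: (false, false)].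
Definition of_artin (c : bool) : seq (bool * bool) :=
  if c then [:: (true, false); (false, true)] else [:: (false, false)].

Definition to_artin_word (w : seq bool) :=
  flatten [seq if c then [:: true; false] else [:: false] | c <- w].

Lemma gsubst_to_artin w : gsubst to_artin (Defs.iota w) = Defs.iota (to_artin_word w).
Proof. by elim: w => //= c w IH; rewrite -cat1s gsubst_cat IH; case: c. Qed.

Lemma to_artin_word_cat u v : to_artin_word (u ++ v) = to_artin_word u ++ to_artin_word v.
Proof. by rewrite /to_artin_word map_cat flatten_cat. Qed.

Lemma to_artin_word_r2 j : to_artin_word (nseq j true) = flatten (nseq j [:: true; false]).
Proof. by elim: j => //= j IH; rewrite -IH. Qed.

(** r1 r2^k r1 |-> (s t s ...) s and r2^(k+1) |-> (t s t ...) s. *)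
Lemma to_artin_hom u v : gcong R u v -> gcong R2 (gsubst to_artin u) (gsubst to_artin v).
Proof.
apply: gsubst_gcong => u0 v0 /BM_relE [-> ->]; rewrite !gsubst_to_artin.
have -> : to_artin_word lhs = alt false m ++ [:: false].
  by rewrite !to_artin_word_cat to_artin_word_r2 alt_false_odd.
have -> : to_artin_word rhs = alt true m ++ [:: false].
  by rewrite to_artin_word_r2 flatten_nseqSr alt_true_odd -catA.
rewrite !iota_cat.
exact: (@gcong_rel _ R2 [::] _ (alt false m) (alt true m) (conj erefl erefl)).
Qed.

Lemma of_artin_alt_false j : gcong R (gsubst of_artin (Defs.iota (alt false j.*2.+1)))
                                   (Defs.iota (false :: nseq j true)).
Proof.
elim: j => [|j IH]; first exact: gcong_refl.
rewrite doubleS altSS !oddS odd_double iota_cat gsubst_cat.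
apply: gcong_trans (gcong_catr _ IH) _.
set X := Defs.iota (false :: nseq j true) ++ [:: (true, false)].
apply: (gcong_trans (v := X ++ [:: (false, true); (false, ~~ true)] ++ [::])).
  by apply: gcong_eq; rewrite /X -!catA.
apply: gcong_trans (gcong_free R X [::] false true) _; apply: gcong_eq.
by rewrite /X cats0 nseqSr -cat_cons iota_cat.
Qed.

Lemma of_artin_alt_true j : gcong R (gsubst of_artin (Defs.iota (alt true j.*2.+1)))
                                  (Defs.iota (nseq j.+1 true) ++ [:: (false, true)]).
Proof.
elim: j => [|j IH]; first exact: gcong_refl.
rewrite doubleS altSS !oddS odd_double iota_cat gsubst_cat.
apply: gcong_trans (gcong_catr _ IH) _.
rewrite [nseq j.+2 _]nseqSr iota_cat -!catA; apply: gcong_catl.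
exact: (gcong_free R [::] _ false true).
Qed.

(** Both sides of the Artin relation map to r1 r2^k = r2^(k+1) r1^-1. *)
Lemma of_artin_hom u v : gcong R2 u v -> gcong R (gsubst of_artin u) (gsubst of_artin v).
Proof.
apply: gsubst_gcong => u0 v0 [-> ->].
apply: gcong_trans (of_artin_alt_false k) _.
apply: gcong_sym; apply: gcong_trans (of_artin_alt_true k) _; apply: gcong_sym.
apply: gcong_trans (_ : gcong R (Defs.iota (false :: nseq k true) ++
        (Defs.iota [:: false] ++ ginv (Defs.iota [:: false]))) _).
  by rewrite -{1}[Defs.iota (false :: _)]cats0; apply/gcong_catl/gcong_sym/mulgV.
rewrite catA -iota_cat; apply/gcong_catr/gcong_of_mcong.
by apply: (mcong_relation (x := [::]) (y := [::])); rewrite ?cats0.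
Qed.

Lemma of_to_artin u : gcong R (gsubst of_artin (gsubst to_artin u)) u.
Proof.
rewrite gsubst_comp; apply: gsubst_fixed => -[]; last exact: gcong_refl.
exact: (gcong_free R [:: (true, false)] [::] false true).
Qed.

Lemma to_of_artin u : gcong R2 (gsubst to_artin (gsubst of_artin u)) u.
Proof.
rewrite gsubst_comp; apply: gsubst_fixed => -[]; last exact: gcong_refl.
exact: (gcong_free R2 [:: (true, false)] [::] false false).
Qed.

Theorem BM_artin_iso : pres_group_iso R R2.
Proof.
exists to_artin, of_artin; split;
  [exact: to_artin_hom | exact: of_artin_hom | exact: of_to_artin | exact: to_of_artin].
Qed.

End BraidMonoid.

Theorem proposition6p3 (m : nat) :
  3 <= m -> odd m ->
  [/\ garside_monoid (BM_rel m) (BM_Delta m),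
      group_of_fractions (BM_rel m)
    & pres_group_iso (BM_rel m) (artin_I2_rel m)].
Proof.
move=> _ m_odd.
have -> : m = (m./2).*2.+1 by have := odd_double_half m; rewrite m_odd; lia.
split; [exact: BM_garside | exact: BM_group_of_fractions | exact: BM_artin_iso].
Qed.
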